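(* In the $K$-tier network model described in the context with $W=0$, let tier $k$ use target SINR $\beta_k>0$ and rate $\mathcal R_k=\log_2(1+\beta_k)$, and define $$\mathcal F=\frac{\sum_{k=1}^K\lambda_k\mathcal A_k(1-\mathcal O_k^{int})\mathcal R_k}{\sum_{k=1}^K\lambda_k\mathcal A_k\big(\frac1\eta P_k+M_kP_C\big)+\sum_{k=1}^K\lambda_kP_S}$$ with constants $\eta\in(0,1]$, $P_C>0$, $P_S>0$. Regarded as a function of the access threshold $\epsilon$, $\lim_{\epsilon\to\infty}\mathcal F=0$.
   Context: Network model: $\mathcal K=\{1,\dots,K\}$. In $\mathbb R^2$, tier-$k$ BSs form a homogeneous PPP of intensity $\lambda_k>0$ and users a homogeneous PPP of intensity $\lambda_u>0$, all independent. Tier-$k$ BSs have transmit power $P_k>0$, $M_k\in\mathbb N$ antennas, bias $B_k>0$, path-loss exponent $\alpha_k>2$. $\Omega_k=P_kM_kB_k$, $\delta_k=2/\alpha_k$, $\Omega_{j,k}=\Omega_j/\Omega_k$, $\delta_{j,k}=\delta_j/\delta_k$. Access threshold $\epsilon>0$, $R_k=(\Omega_k/\epsilon)^{1/\alpha_k}$. Association: with $D_k$ the distance from a typical user to its nearest tier-$k$ BS, $\hat\rho_k=\Omega_kD_k^{-\alpha_k}$ if $D_k\le R_k$, else $0$; association with tier $k$ iff $\hat\rho_k>\hat\rho_j$ for all $j\ne k$, with probability $\mathcal T_k=\pi\lambda_k\int_0^{R_k^2}\exp(-\pi\sum_j\lambda_j\Omega_{j,k}^{\delta_j}r^{\delta_{j,k}})dr$.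 Activation probability of tier $j$: $\mathcal A_j=1-\exp\big(-\pi\lambda_u\int_0^{R_j^2}\exp(-\pi\sum_l\lambda_l\Omega_{l,j}^{\delta_l}r^{\delta_{l,j}})dr\big)$; active tier-$j$ BSs are modeled as a homogeneous PPP of intensity $\mathcal A_j\lambda_j$. Outage model: conditional on association with tier $k$, the serving distance $X_k$ has density $\frac{2\pi\lambda_k}{\mathcal T_k}x\exp(-\pi\sum_j\lambda_j\Omega_{j,k}^{\delta_j}x^{2\delta_{j,k}})$ on $(0,R_k]$; given $X_k$, interferers of tier $j$ are the points of independent homogeneous PPPs of intensity $\mathcal A_j\lambda_j$ outside the disk around the user of radius $\Omega_{j,k}^{1/\alpha_j}X_k^{\alpha_k/\alpha_j}$; $\|\mathbf h\|^2\sim\mathrm{Gamma}(M_k,1)$, an interferer of tier $j$ at distance $r$ contributes $P_jVr^{-\alpha_j}$ with $V\sim\mathrm{Exp}(1)$, all independent; $I_o$ is the total interference and $\mathcal O_k^{int}=\mathbb P\{P_k\|\mathbf h\|^2X_k^{-\alpha_k}/I_o<\beta_k\}$. $P_C$ is per-antenna circuit power, $P_S$ static power, $\eta$ amplifier efficiency. *)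

From HB Require Import structures.
From mathcomp Require Import all_boot all_order all_algebra.
From mathcomp Require Import all_classical all_reals all_analysis.
Set Implicit Arguments. Unset Strict Implicit. Unset Printing Implicit Defensive.
Import Order.TTheory GRing.Theory Num.Theory numFieldNormedType.Exports.
Local Open Scope classical_set_scope.
Local Open Scope ring_scope.

Section Model.
Variables (R : realType) (K : nat).
(* tier parameters: intensity lambda_k, power P_k, antennas M_k, bias B_k,
   path-loss exponent alpha_k *)
Variables (lam Pw Bi al : 'I_K -> R) (Mk : 'I_K -> nat).
Variable lamu : R.

Local Notation leb := (@lebesgue_measure R).

Definition Om (k : 'I_K) : R := Pw k * (Mk k)%:R * Bi k.
Definition dl (k : 'I_K) : R := 2 / al k.
Definition Rk (eps : R) (k : 'I_K) : R := (Om k / eps) `^ (1 / al k).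

Definition expo (k : 'I_K) (r : R) : R :=
  expR (- (pi * \sum_(j < K) lam j * (Om j / Om k) `^ (dl j) * r `^ (dl j / dl k))).

Definition Tk (eps : R) (k : 'I_K) : R :=
  pi * lam k * \int[leb]_(r in `[0, Rk eps k ^+ 2]) expo k r.

Definition Ak (eps : R) (j : 'I_K) : R :=
  1 - expR (- (pi * lamu * \int[leb]_(r in `[0, Rk eps j ^+ 2]) expo j r)).

Definition distdens (eps : R) (k : 'I_K) (x : R) : R :=
  2 * pi * lam k / Tk eps k * x *
  expR (- (pi * \sum_(j < K) lam j * (Om j / Om k) `^ (dl j) * x `^ (2 * (dl j / dl k)))).

(* exclusion radius of tier-j interferers given serving distance x *)
Definition exclr (k j : 'I_K) (x : R) : R :=
  (Om j / Om k) `^ (1 / al j) * x `^ (al k / al j).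

(* Laplace transform E[exp(-u I_o) | X_k = x] of the interference generated by
   independent homogeneous PPPs of intensity A_j lambda_j outside the disks of
   radius exclr k j x, each interferer contributing P_j V r^{-alpha_j},
   V ~ Exp(1) (probability generating functional of the PPP, polar coordinates). *)
Definition LapI (eps : R) (k : 'I_K) (u x : R) : R :=
  expR (- \sum_(j < K) 2 * pi * Ak eps j * lam j *
     \int[leb]_(r in `[exclr k j x, +oo[)
        (r * (1 - 1 / (1 + u * Pw j * r `^ (- al j))))).

(* The random objects of the outage model of tier k, for threshold eps,
   on a probability space (T, Pr): serving distance X, channel gain G = ||h||^2,
   total interference I. *)
Record outage_model (eps : R) (k : 'I_K) d (T : measurableType d)
    (Pr : probability T R) (X G I : T -> R) : Prop := {
  om_X : measurable_fun setT X;
  om_G : measurable_fun setT G;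
  om_I : measurable_fun setT I;
  (* ||h||^2 ~ Gamma(M_k, 1) (Erlang cdf) *)
  om_G_nonneg : Pr [set w | G w < 0] = 0%E;
  om_G_cdf : forall t : R, 0 <= t ->
    Pr [set w | G w <= t] =
      (1 - \sum_(m < Mk k) expR (- t) * t ^+ m / (m`!)%:R)%:E;
  om_I_nonneg : Pr [set w | I w < 0] = 0%E;
  (* joint law of (X_k, I_o): X_k has density distdens on (0, R_k] and,
     given X_k = x, I_o has Laplace transform LapI u x *)
  om_XI : forall (B : set R) (u : R), measurable B -> 0 <= u ->
    \int[Pr]_(w in X @^-1` B) expR (- (u * I w)) =
    \int[leb]_(x in B `&` `]0, Rk eps k]) (distdens eps k x * LapI eps k u x);
  om_indep : forall A B C : set R, measurable A -> measurable B -> measurable C ->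
    Pr (G @^-1` A `&` X @^-1` B `&` I @^-1` C) =
    (Pr (G @^-1` A) * Pr (X @^-1` B `&` I @^-1` C))%E
}.

Definition outage d (T : measurableType d) (Pr : probability T R)
    (X G I : T -> R) (beta : R) (k : 'I_K) : R :=
  fine (Pr [set w | Pw k * G w * X w `^ (- al k) / I w < beta]).

Definition EEff (eps : R) (O : 'I_K -> R) (beta : 'I_K -> R)
    (eta PC PS : R) : R :=
  (\sum_(k < K) lam k * Ak eps k * (1 - O k) * (ln (1 + beta k) / ln 2)) /
  (\sum_(k < K) lam k * Ak eps k * (Pw k / eta + (Mk k)%:R * PC) +
   \sum_(k < K) lam k * PS).

End Model.

From Pilot Require Import Defs.
From HB Require Import structures.
From mathcomp Require Import all_boot all_order all_algebra.
From mathcomp Require Import all_classical all_reals all_analysis.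
From mathcomp Require Import measurable_realfun.
Set Implicit Arguments. Unset Strict Implicit. Unset Printing Implicit Defensive.
Import Order.TTheory GRing.Theory Num.Theory numFieldNormedType.Exports.
Local Open Scope classical_set_scope.
Local Open Scope ring_scope.

(* As eps grows, every access radius R_k = (Omega_k/eps)^(1/alpha_k) shrinks to
   0.  The activation probability A_k is 1 - exp(-pi lambda_u J_k), where J_k
   integrates a function with values in [0,1] over [0, R_k^2]; so J_k <= R_k^2
   and A_k -> 0.  Each term lambda_k A_k (1 - O_k) log2(1 + beta_k) of the
   numerator of F lies between 0 and lambda_k A_k log2(1 + beta_k), hence tends
   to 0, while the denominator tends to sum_k lambda_k P_S > 0 thanks to the
   static power. *)

Lemma measurable_invr (R : realType) : measurable_fun [set: R] (@GRing.inv R).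
Proof.
have -> : [set: R] = [set 0] `|` [set x | x != 0].
  by apply/seteqP; split => x // _; case: (eqVneq x 0) => [->|]; [left|right].
apply/measurable_funU => //; first by apply: open_measurable; exact: open_neq.
split; first exact: measurable_fun_set1.
apply: open_continuous_measurable_fun; first exact: open_neq.
by move=> x; rewrite inE => /= x_neq0; exact: inv_continuous.
Qed.

Lemma fine_probability_itv d (T : measurableType d) (R : realType)
    (P : probability T R) (A : set T) :
  measurable A -> 0 <= fine (P A) <= 1.
Proof.
move=> mA; have PA_ge0 := measure_ge0 P A; have PA_le1 := probability_le1 P mA.
by rewrite fine_ge0 //= -lee_fin fineK // ge0_fin_numE // (le_lt_trans PA_le1) ?ltry.
Qed.

Lemma Rintegral_itv_le_length (R : realType) (f : R -> R) (a b : R) :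
  a <= b -> measurable_fun `[a, b]%classic f ->
  (forall x, x \in `[a, b] -> 0 <= f x <= 1) ->
  \int[lebesgue_measure]_(x in `[a, b]) f x <= b - a.
Proof.
move=> ab mf f01; rewrite /Rintegral.
have int_ge0 : (0 <= \int[lebesgue_measure]_(x in `[a, b]) (f x)%:E)%E.
  by apply: integral_ge0 => x /f01 /andP[+ _]; rewrite lee_fin.
have int_le : (\int[lebesgue_measure]_(x in `[a, b]) (f x)%:E <= (b - a)%:E)%E.
  apply: (@le_trans _ _ (\int[lebesgue_measure]_(x in `[a, b]) (cst 1%:E) x)%E).
    apply: ge0_le_integral => //.
    - by move=> x /f01 /andP[+ _]; rewrite lee_fin.
    - exact/measurable_EFinP.
    - by move=> x /f01 /andP[_]; rewrite lee_fin.
  rewrite integral_cst // mul1e.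
  have := @lebesgue_measure_itv R `[a, b]; rewrite /= => ->.
  by case: ifPn => _; rewrite ?EFinB // lee_fin subr_ge0.
by rewrite -lee_fin fineK // ge0_fin_numE // (le_lt_trans int_le) ?ltry.
Qed.

Lemma divr_cvg0_pinfty_right (R : realType) (c : R) :
  0 < c -> c / x @[x --> +oo] --> 0^'+.
Proof.
move=> c_gt0.
have c_div_cvg0 : c / x @[x --> +oo] --> 0.
  rewrite -(mulr0 c); apply: cvgM; first exact: cvg_cst.
  by apply/gtr0_cvgV0; [exact: nbhs_pinfty_gt | exact: cvg_id].
have c_div_gt0 : \forall x \near +oo, 0 < c / x.
  by apply: filterS (nbhs_pinfty_gt (real0 R)) => x; exact: divr_gt0.
move=> A /c_div_cvg0 near_A.
by apply: filterS2 c_div_gt0 near_A => x pos /(_ pos).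
Qed.

Lemma outage_itv (R : realType) (K : nat) (lam Pw Bi al : 'I_K -> R)
    (Mk : 'I_K -> nat) (lamu eps beta : R) (k : 'I_K)
    d (T : measurableType d) (Pr : probability T R) (X G I : T -> R) :
  outage_model lam Pw Bi al Mk lamu eps k Pr X G I ->
  0 <= outage Pw al Pr X G I beta k <= 1.
Proof.
case=> mX mG mI _ _ _ _ _; apply: fine_probability_itv.
have mSINR : measurable_fun setT (fun w => Pw k * G w * X w `^ (- al k) / I w).
  apply: measurable_funM; last exact: measurableT_comp (@measurable_invr R) mI.
  apply: measurable_funM; first exact: measurable_funM.
  exact: measurableT_comp (measurable_powR _) mX.
rewrite -[S in measurable S]setTI.
by apply: measurable_fun_ltr mSINR (measurable_cst beta) measurableT _ _.
Qed.

Section EnergyEfficiencyLimit.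
Variables (R : realType) (K : nat).
Variables (lam Pw Bi al : 'I_K -> R) (Mk : 'I_K -> nat) (lamu : R).
Hypotheses (lam_gt0 : forall k, 0 < lam k) (Pw_gt0 : forall k, 0 < Pw k).
Hypotheses (Mk_gt0 : forall k, (0 < Mk k)%N) (Bi_gt0 : forall k, 0 < Bi k).
Hypotheses (al_gt0 : forall k, 0 < al k) (lamu_ge0 : 0 <= lamu).

Local Notation Om := (Om Pw Bi Mk).
Local Notation Rk := (Rk Pw Bi al Mk).
Local Notation expo := (expo lam Pw Bi al Mk).
Local Notation Ak := (Ak lam Pw Bi al Mk lamu).

Lemma Om_gt0 k : 0 < Om k.
Proof. by rewrite /Defs.Om !mulr_gt0 ?ltr0n. Qed.

Lemma Rk_cvg0 k : Rk eps k @[eps --> +oo] --> 0.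
Proof.
have inv_al_gt0 : 0 < 1 / al k by rewrite divr_gt0.
exact: cvg_comp (divr_cvg0_pinfty_right (Om_gt0 k)) (powR_cvg0 inv_al_gt0).
Qed.

Lemma measurable_expo k : measurable_fun setT (expo k).
Proof.
apply: measurableT_comp; first exact: measurable_expR.
apply/measurable_funN/measurable_funM; first exact: measurable_cst.
apply: measurable_sum => j.
by apply: measurable_funM; [exact: measurable_cst | exact: measurable_powR].
Qed.

Lemma expo_itv k r : 0 <= expo k r <= 1.
Proof.
rewrite expR_ge0 /= -expR0 ler_expR oppr_le0 mulr_ge0 ?pi_ge0 //.
by apply: sumr_ge0 => j _; rewrite !mulr_ge0 ?powR_ge0 ?ltW.
Qed.

Lemma int_expo_cvg0 k :
  \int[lebesgue_measure]_(r in `[0, Rk eps k ^+ 2]) expo k r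
    @[eps --> +oo] --> 0.
Proof.
have Rk2_cvg0 : Rk eps k ^+ 2 @[eps --> +oo] --> 0.
  under eq_fun do rewrite expr2.
  by rewrite -(mulr0 0); apply: cvgM; exact: Rk_cvg0.
apply: squeeze_cvgr (cvg_cst 0) Rk2_cvg0; near=> eps.
rewrite Rintegral_ge0 => [/=|x _]; last by case/andP: (expo_itv k x).
rewrite -[leRHS]subr0; apply: Rintegral_itv_le_length; first exact: sqr_ge0.
  exact: measurable_funS (measurable_expo k).
by move=> x _; exact: expo_itv.
Unshelve. all: end_near.
Qed.

Lemma Ak_ge0 eps k : 0 <= Ak eps k.
Proof.
rewrite /Defs.Ak subr_ge0 -expR0 ler_expR oppr_le0 !mulr_ge0 ?pi_ge0 //.
by apply: Rintegral_ge0 => x _; case/andP: (expo_itv k x).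
Qed.

Lemma Ak_cvg0 k : Ak eps k @[eps --> +oo] --> 0.
Proof.
have -> : 0 = 1 - expR (- (pi * lamu * 0)) :> R.
  by rewrite mulr0 oppr0 expR0 subrr.
apply: cvgB; first exact: cvg_cst.
apply: continuous_cvg; first exact: continuous_expR.
by apply: cvgN; apply: cvgM; [exact: cvg_cst | exact: int_expo_cvg0].
Qed.

Variables (beta : 'I_K -> R) (eta PC PS : R).
Hypotheses (beta_ge0 : forall k, 0 <= beta k) (PS_gt0 : 0 < PS).

Lemma EEff_cvg0 (O : R -> 'I_K -> R) : (0 < K)%N ->
  (forall k, \forall eps \near +oo, 0 <= O eps k <= 1) ->
  EEff lam Pw Bi al Mk lamu eps (O eps) beta eta PC PS @[eps --> +oo] --> 0.
Proof.
move=> K_gt0 O_itv.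
have sum0 : \sum_(k < K) 0 = 0 :> R by rewrite big1.
pose rate k := ln (1 + beta k) / ln 2.
have rate_ge0 k : 0 <= rate k.
  by rewrite divr_ge0 // ln_ge0 ?ler1n // lerDl.
have num_cvg0 : \sum_(k < K) lam k * Ak eps k * (1 - O eps k) * rate k
    @[eps --> +oo] --> 0.
  rewrite -[X in _ --> X]sum0.
  apply: cvg_big; first exact: add_continuous.
  move=> k _.
  have bound_cvg0 : lam k * Ak eps k * rate k @[eps --> +oo] --> 0.
    rewrite -(mul0r (rate k)) -(mulr0 (lam k)).
    apply: cvgM; last exact: cvg_cst.
    by apply: cvgM; [exact: cvg_cst | exact: Ak_cvg0].
  apply: squeeze_cvgr (cvg_cst 0) bound_cvg0.
  apply: filterS (O_itv k) => x /andP[Ox_ge0 Ox_le1].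
  have lamA_ge0 : 0 <= lam k * Ak x k by rewrite mulr_ge0 ?Ak_ge0 ?ltW.
  apply/andP; split; first by rewrite mulr_ge0 // mulr_ge0 // subr_ge0.
  by rewrite ler_wpM2r // ler_piMr // lerBlDr lerDl.
have den_cvg : \sum_(k < K) lam k * Ak eps k * (Pw k / eta + (Mk k)%:R * PC)
    + \sum_(k < K) lam k * PS @[eps --> +oo] --> \sum_(k < K) lam k * PS.
  rewrite -[X in _ --> X]add0r; apply: cvgD; last exact: cvg_cst.
  rewrite -[X in _ --> X]sum0.
  apply: cvg_big; first exact: add_continuous.
  move=> k _; rewrite -(mul0r (Pw k / eta + (Mk k)%:R * PC)) -(mulr0 (lam k)).
  apply: cvgM; last exact: cvg_cst.
  by apply: cvgM; [exact: cvg_cst | exact: Ak_cvg0].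
have den_neq0 : \sum_(k < K) lam k * PS != 0.
  rewrite gt_eqF // (bigD1 (Ordinal K_gt0)) //=.
  by rewrite ltr_pwDl ?mulr_gt0 // sumr_ge0 // => k _; rewrite mulr_ge0 ?ltW.
rewrite -(mul0r (\sum_(k < K) lam k * PS)^-1).
exact: cvgM num_cvg0 (cvgV den_neq0 den_cvg).
Qed.
End EnergyEfficiencyLimit.

Theorem proposition2 (R : realType) (K : nat)
    (lam Pw Bi al : 'I_K -> R) (Mk : 'I_K -> nat) (lamu : R)
    (beta : 'I_K -> R) (eta PC PS : R)
    (d : measure_display) (T : measurableType d)
    (Pr : R -> 'I_K -> probability T R) (X G I : R -> 'I_K -> T -> R) :
  (0 < K)%N ->
  (forall k, 0 < lam k) -> (forall k, 0 < Pw k) -> (forall k, (0 < Mk k)%N) ->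
  (forall k, 0 < Bi k) -> (forall k, 2 < al k) -> 0 < lamu ->
  (forall k, 0 < beta k) -> 0 < eta <= 1 -> 0 < PC -> 0 < PS ->
  (forall eps k, 0 < eps ->
     outage_model lam Pw Bi al Mk lamu eps k (Pr eps k)
       (X eps k) (G eps k) (I eps k)) ->
  EEff lam Pw Bi al Mk lamu eps
    (fun k => outage Pw al (Pr eps k) (X eps k) (G eps k) (I eps k) (beta k) k)
    beta eta PC PS
  @[eps --> +oo] --> 0.
Proof.
(* eta and PC only weigh the A_k-terms of the denominator, which vanish. *)
move=> K_gt0 lam_gt0 Pw_gt0 Mk_gt0 Bi_gt0 al_gt2 lamu_gt0 beta_gt0 _ _ PS_gt0 model.
have al_gt0 k : 0 < al k by rewrite (lt_trans _ (al_gt2 k)).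
apply: EEff_cvg0 => //.
- exact: ltW.
- by move=> k; exact: ltW.
- move=> k; apply: filterS (nbhs_pinfty_gt (real0 R)) => eps eps_gt0.
  exact: outage_itv (model eps k eps_gt0).
Qed.
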